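(* Consider a team-against-team zero-sum game with standard Borel state space $\Omega_0$, Team 1 (minimizer, $N_1$ players) and Team 2 (maximizer, $N_2$ players), standard Borel measurement spaces $\mathbb{Y}^j_i$, compact standard Borel action spaces $\mathbb{U}^j_i$, and a cost $c:\Omega_0\times\prod_j\mathbb{U}^j_1\times\prod_j\mathbb{U}^j_2\to\mathbb{R}$ that is measurable, bounded and continuous in the players' actions for every $\omega_0$. Each team uses team policies with common randomness within the team (randomness independent across teams). Consider information structures (probability measures on $\Omega_0\times\prod_j\mathbb{Y}^j_1\times\prod_j\mathbb{Y}^j_2$) such that for each team $i$ the marginal on $\Omega_0\times\prod_{j}\mathbb{Y}^j_i$ is absolutely continuous with respect to a product $\mu_{0}\otimes\bigotimes_j\bar Q^j_i$ of probability measures, so that a saddle-point equilibrium exists with value $J^*(c,\cdot)$. Then $J^*(c,\cdot)$ is continuous under total variation on this class: if $\mu_n,\mu$ belong to this class and $\|\mu_n-\mu\|_{TV}\to0$, then $J^*(c,\mu_n)\to J^*(c,\mu)$.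
   Context: Team policies with common randomness: $u^j_i=\gamma^j_i(y^j_i,z_i)$ where $z_i\in[0,1]^{N_i}$ is independent of the state and measurements and of the other team's randomness. The equilibrium value $J^*(c,\mu)$ is the common value of $\inf_{\bar\gamma_1}\sup_{\bar\gamma_2}$ and $\sup_{\bar\gamma_2}\inf_{\bar\gamma_1}$ of $E^{\mu,\bar\gamma_1,\bar\gamma_2}[c(\omega_0,u_1,u_2)]$. $\|P-Q\|_{TV}=\sup_{\|f\|_\infty\le1}|\int f\,dP-\int f\,dQ|$. *)

From HB Require Import structures.
From mathcomp Require Import all_boot all_order all_algebra.
From mathcomp Require Import all_classical all_reals all_analysis.

Set Implicit Arguments.
Unset Strict Implicit.
Unset Printing Implicit Defensive.
Import Order.TTheory GRing.Theory Num.Theory.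
Import numFieldNormedType.Exports.
Local Open Scope classical_set_scope.
Local Open Scope ring_scope.

Definition borelT (T : ptopologicalType) : Type := T.

Section borel_measurable.
Context (T : ptopologicalType).

HB.instance Definition _ := Pointed.on (borelT T).

Definition borel_sets : set (set (borelT T)) := <<s (@open T) >>.

Let borel0 : borel_sets set0.
Proof. exact: sigma_algebra0. Qed.
Let borelC A : borel_sets A -> borel_sets (~` A).
Proof. exact: sigma_algebraC. Qed.
Let borelU (F : (set (borelT T))^nat) :
  (forall i, borel_sets (F i)) -> borel_sets (\bigcup_i (F i)).
Proof. exact: sigma_algebra_bigcup. Qed.

HB.instance Definition _ := @isMeasurable.Build default_measure_display
  (borelT T) borel_sets borel0 borelC borelU.
End borel_measurable.

Definition Mprod (n : nat) (d : 'I_n -> measure_display)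
  (T : forall i, measurableType (d i)) : Type := forall i, T i.

Section Mprod_measurable.
Context (n : nat) (d : 'I_n -> measure_display)
  (T : forall i, measurableType (d i)).

HB.instance Definition _ := Pointed.on (forall i, T i).
HB.instance Definition _ := Pointed.on (Mprod T).

Definition cylinders : set (set (Mprod T)) :=
  [set A | exists i (B : set (T i)), measurable B /\
                                     A = (fun x : Mprod T => x i) @^-1` B].

Definition Mprod_sets : set (set (Mprod T)) := <<s cylinders >>.

Let Mprod0 : Mprod_sets set0.
Proof. exact: sigma_algebra0. Qed.
Let MprodC A : Mprod_sets A -> Mprod_sets (~` A).
Proof. exact: sigma_algebraC. Qed.
Let MprodU (F : (set (Mprod T))^nat) :
  (forall i, Mprod_sets (F i)) -> Mprod_sets (\bigcup_i (F i)).
Proof. exact: sigma_algebra_bigcup. Qed.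

HB.instance Definition _ := @isMeasurable.Build default_measure_display
  (Mprod T) Mprod_sets Mprod0 MprodC MprodU.
End Mprod_measurable.

(* Standard Borel spaces: measurable spaces Borel-isomorphic to a Borel       *)
(* subset of the real line (equivalently, of a Polish space, by Kuratowski).  *)
Definition standard_borel (R : realType) d (T : measurableType d) : Prop :=
  exists f : T -> R, [/\ measurable_fun [set: T] f, injective f,
    measurable (range f) &
    forall A : set T, measurable A -> measurable (f @` A)].

Definition tv_dist (R : realType) d (X : measurableType d)
  (P Q : probability X R) : \bar R :=
  ereal_sup [set `| (\int[P]_x (f x)%:E - \int[Q]_x (f x)%:E)%E |%E
            | f in [set f : X -> R | measurable_fun [set: X] f /\
                                     forall x, `|f x| <= 1]].

Section game.
Context (R : realType) (dO : measure_display) (Om : measurableType dO).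

Section team.
Context (N : nat) (dY : 'I_N -> measure_display)
  (Y : forall j, measurableType (dY j)) (U : 'I_N -> pseudoPMetricType R).

Definition Act (j : 'I_N) := borelT (U j).

(* A team policy with common randomness: a distribution eta of the common
   random variable z in [0,1]^N (independent of everything else), and
   measurable maps gamma^j : Y^j x [0,1]^N -> U^j, u^j = gamma^j(y^j, z). *)
Definition team_policy : Type :=
  (probability (N.-tuple R) R * (forall j, Y j * N.-tuple R -> Act j))%type.

Definition unit_cube : set (N.-tuple R) :=
  [set z | forall i : 'I_N, 0 <= tnth z i <= 1].

Definition admissible (p : team_policy) : Prop :=
  p.1 unit_cube = 1%E /\
  forall j, measurable_fun [set: Y j * N.-tuple R] (p.2 j).

Definition team_actions (p : team_policy) (y : Mprod Y) (z : N.-tuple R)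
  : Mprod Act := fun j => p.2 j (y j, z).

Definition is_product_measure (mu0 : probability Om R)
  (Q : forall j, probability (Y j) R)
  (P : {measure set (Om * Mprod Y)%type -> \bar R}) : Prop :=
  forall (A0 : set Om) (A : forall j, set (Y j)),
    measurable A0 -> (forall j, measurable (A j)) ->
    P (A0 `*` [set y : Mprod Y | forall j, A j (y j)]) =
    (mu0 A0 * \prod_(j < N) Q j (A j))%E.

Definition ac_wrt_product (m : set (Om * Mprod Y)%type -> \bar R) : Prop :=
  exists (mu0 : probability Om R) (Q : forall j, probability (Y j) R)
         (P : {measure set (Om * Mprod Y)%type -> \bar R}),
    is_product_measure mu0 Q P /\ m `<< P.
End team.

Context (N1 N2 : nat)
  (dY1 : 'I_N1 -> measure_display) (Y1 : forall j, measurableType (dY1 j))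
  (dY2 : 'I_N2 -> measure_display) (Y2 : forall j, measurableType (dY2 j))
  (U1 : 'I_N1 -> pseudoPMetricType R) (U2 : 'I_N2 -> pseudoPMetricType R).

Definition Info := (Om * Mprod Y1 * Mprod Y2)%type.
Definition Outcome := (Om * Mprod (Act U1) * Mprod (Act U2))%type.

Definition in_class (mu : probability Info R) : Prop :=
  ac_wrt_product (pushforward mu (fun x : Info => x.1)) /\
  ac_wrt_product (pushforward mu (fun x : Info => (x.1.1, x.2))).

Variable c : Outcome -> R.

(* expected cost E^{mu, g1, g2}[c(w0, u1, u2)], the common randomness of
   the two teams being independent of each other and of (w0, y). *)
Definition expected_cost (mu : probability Info R)
  (p1 : team_policy Y1 U1) (p2 : team_policy Y2 U2) : \bar R :=
  (\int[p1.1]_z1 \int[p2.1]_z2 \int[mu]_x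
     (c (x.1.1, team_actions p1 x.1.2 z1, team_actions p2 x.2 z2))%:E)%E.

Definition upper_value (mu : probability Info R) : \bar R :=
  ereal_inf [set ereal_sup [set expected_cost mu p1 p2
                           | p2 in @admissible _ _ Y2 U2]
            | p1 in @admissible _ _ Y1 U1].

Definition lower_value (mu : probability Info R) : \bar R :=
  ereal_sup [set ereal_inf [set expected_cost mu p1 p2
                           | p1 in @admissible _ _ Y1 U1]
            | p2 in @admissible _ _ Y2 U2].

End game.

From HB Require Import structures.
From mathcomp Require Import all_boot all_order all_algebra.
From mathcomp Require Import all_classical all_reals all_analysis.
From mathcomp Require Import lra.

(* For fixed team policies and a fixed value of the common randomness of both
   teams, the cost is a bounded measurable function of the information
   variables, so its expectations under [mu_ n] and [mu] differ by at most
   [sup |c|] times the total variation distance.  Integrating out the common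
   randomness of each team at most doubles such a bound (the integrands are not
   known to be measurable, so only the definition of the integral through
   simple minorants is used), hence the expected costs under [mu_ n] and [mu]
   are within [4 sup |c| ||mu_ n - mu||_TV] of each other uniformly in the
   policies, and such a uniform bound passes through inf-sup and sup-inf. *)

Set Implicit Arguments.
Unset Strict Implicit.
Unset Printing Implicit Defensive.
Import Order.TTheory GRing.Theory Num.Theory.
Import numFieldNormedType.Exports.
Import HBNNSimple measurable_realfun.
Local Open Scope classical_set_scope.
Local Open Scope ring_scope.

Section subpos_nnsfun.
Context d (T : measurableType d) (R : realType) (s : {nnsfun T >-> R}) (e : R).

Definition subpos : T -> R := fun x => Num.max (s x - e) 0.

Let measurable_subpos : measurable_fun [set: T] subpos.
Proof.
apply: measurable_maxr; last exact: measurable_cst.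
by apply: measurable_funB => //; exact: measurable_cst.
Qed.

HB.instance Definition _ := isMeasurableFun.Build d _ T R subpos measurable_subpos.

Let finite_range_subpos : finite_set (range subpos).
Proof.
have -> : range subpos = (fun r => Num.max (r - e) 0) @` range s.
  apply/seteqP; split => [y [x _ <-]|y [r [x _ <-] <-]]; last by exists x.
  by exists (s x) => //; exists x.
exact/finite_image/fimfunP.
Qed.

HB.instance Definition _ := FiniteImage.Build T R subpos finite_range_subpos.

Let subpos_ge0 x : 0 <= subpos x.
Proof. by rewrite /subpos le_max lexx orbT. Qed.

HB.instance Definition _ := isNonNegFun.Build T R subpos subpos_ge0.

Definition subpos_nnsfun : {nnsfun T >-> R} := subpos.

End subpos_nnsfun.

Lemma abse_leP (R : realDomainType) (x : \bar R) (M : R) :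
  (`|x| <= M%:E)%E -> exists2 r, x = r%:E & `|r| <= M.
Proof. by case: x => [r|//|//]; exists r. Qed.

Lemma abse_fine_le (R : realDomainType) (x : \bar R) (M : R) :
  (`|x| <= M%:E)%E -> `|fine x| <= M.
Proof. by case/abse_leP => r ->. Qed.

Lemma bounded_EFin_fine T (R : realDomainType) (F : T -> \bar R) (M : R) :
  (forall x, `|F x| <= M%:E)%E -> F = EFin \o (fine \o F).
Proof. by move=> FM; apply/funext => x /=; have [r -> _] := abse_leP (FM x). Qed.

Lemma max0_le_addr (R : realDomainType) (a b e : R) : `|a - b| <= e ->
  Num.max a 0 <= Num.max b 0 + e.
Proof.
rewrite ler_norml => /andP[eab abe].
have e0 : 0 <= e by apply: le_trans (normr_ge0 (a - b)) _; rewrite ler_norml eab.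
have b_le : b <= Num.max b 0 by rewrite le_max lexx.
have max0_ge0 : 0 <= Num.max b 0 by rewrite le_max lexx orbT.
by rewrite ge_max; apply/andP; split; lra.
Qed.

Section integral_without_measurability.
Context d (T : measurableType d) (R : realType) (P : probability T R).
Local Open Scope ereal_scope.

Lemma integral_cst_probability (r : \bar R) : \int[P]_x r = r.
Proof.
by rewrite integral_cst// -[RHS]mule1; congr (_ * _); exact: probability_setT.
Qed.

(* No measurability is needed: if [s] is a simple minorant of [f], then
   [(s - e)^+] is a simple minorant of [g]. *)
Lemma ge0_integral_le_addr (f g : T -> \bar R) (e : R) : (0 <= e)%R ->
  (forall x, 0 <= f x) -> (forall x, 0 <= g x) ->
  (forall x, f x <= g x + e%:E) ->
  \int[P]_x f x <= \int[P]_x g x + e%:E.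
Proof.
move=> e0 f0 g0 fg; rewrite [leLHS]ge0_integralTE//.
apply: ge_ereal_sup => _ [s /= sf <-].
have subpos_le_g x : (subpos_nnsfun s e x)%:E <= g x.
  rewrite /= /subpos EFin_max ge_max g0 andbT EFinB leeBlDr//.
  exact: le_trans (sf x) (fg x).
apply: (@le_trans _ _
  (sintegral P (add_nnsfun (subpos_nnsfun s e) (cst_nnsfun T (NngNum e0))))).
  by apply: le_sintegral => x /=; rewrite /subpos -lerBlDr le_max lexx.
rewrite sintegralD leeD//.
  by rewrite ge0_integralTE//; apply: ereal_sup_ubound; exists (subpos_nnsfun s e).
by rewrite -integralT_nnsfun (integral_cst_probability e%:E).
Qed.

Lemma integral_EFin_posneg (f : T -> R) : \int[P]_x (f x)%:E =
  \int[P]_x (Num.max (f x) 0)%:E - \int[P]_x (Num.max (- f x) 0)%:E.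
Proof.
rewrite integralE; congr (_ - _); apply: eq_integral => x _.
  by rewrite funeposE EFin_max.
by rewrite funenegE EFin_max EFinN.
Qed.

Lemma ge0_integral_le_cst (f : T -> R) (K : R) : (forall x, 0 <= f x <= K)%R ->
  exists2 r, \int[P]_x (f x)%:E = r%:E & (0 <= r <= K)%R.
Proof.
move=> fK; have f0 x : (0 <= f x)%R by case/andP: (fK x).
have fleK x : (f x <= K)%R by case/andP: (fK x).
have I0 : 0 <= \int[P]_x (f x)%:E by apply: integral_ge0 => x _; rewrite lee_fin.
have IK : \int[P]_x (f x)%:E <= K%:E.
  rewrite -[K%:E]adde0 -[X in X + _](integral_cst_probability K%:E).
  apply: ge0_integral_le_addr => // x; rewrite ?adde0 lee_fin//.
  exact: le_trans (f0 x) (fleK x).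
have Ifin : \int[P]_x (f x)%:E \is a fin_num.
  by rewrite ge0_fin_numE// (le_lt_trans IK) ?ltry.
exists (fine (\int[P]_x (f x)%:E)); first by rewrite fineK.
by rewrite -!lee_fin fineK// I0.
Qed.

Lemma integral_max0_le (a : T -> R) (M : R) : (forall x, `|a x| <= M)%R ->
  exists2 r, \int[P]_x (Num.max (a x) 0)%:E = r%:E & (0 <= r <= M)%R.
Proof.
move=> aM; apply: ge0_integral_le_cst => x.
rewrite le_max lexx orbT ge_max /=; have := aM x; rewrite ler_norml.
by case/andP => Ma aM'; apply/andP; split=> //; lra.
Qed.

Lemma integral_abse_le (F : T -> \bar R) (M : R) :
  (forall x, `|F x| <= M%:E) -> `|\int[P]_x F x| <= M%:E.
Proof.
move=> FM; rewrite (bounded_EFin_fine FM) integral_EFin_posneg.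
set f := fine \o F; have fM x : (`|f x| <= M)%R := abse_fine_le (FM x).
have fNM x : (`|- f x| <= M)%R by rewrite normrN.
have [p -> /andP[p0 pM]] := integral_max0_le fM.
have [n -> /andP[n0 nM]] := integral_max0_le fNM.
rewrite -EFinB lee_fin ler_norml.
by clear -p0 pM n0 nM; apply/andP; split; lra.
Qed.

Lemma integral_abse_sub_le (F G : T -> \bar R) (M e : R) :
  (forall x, `|F x| <= M%:E) -> (forall x, `|G x| <= M%:E) ->
  (forall x, `|F x - G x| <= e%:E) ->
  `|\int[P]_x F x - \int[P]_x G x| <= (e *+ 2)%:E.
Proof.
move=> FM GM FGe.
rewrite (bounded_EFin_fine FM) (bounded_EFin_fine GM).
set f := fine \o F; set g := fine \o G.
rewrite (integral_EFin_posneg f) (integral_EFin_posneg g).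
have fM x : (`|f x| <= M)%R := abse_fine_le (FM x).
have gM x : (`|g x| <= M)%R := abse_fine_le (GM x).
have fNM x : (`|- f x| <= M)%R by rewrite normrN.
have gNM x : (`|- g x| <= M)%R by rewrite normrN.
have fge x : (`|f x - g x| <= e)%R.
  have := FGe x; rewrite /f /g /=.
  by have [r -> _] := abse_leP (FM x); have [s -> _] := abse_leP (GM x).
have gfe x : (`|g x - f x| <= e)%R by rewrite distrC.
have fNge x : (`|- f x - - g x| <= e)%R by rewrite -opprD normrN.
have gNfe x : (`|- g x - - f x| <= e)%R by rewrite -opprD normrN.
have e0 : (0 <= e)%R by apply: le_trans (fge point).
have max0_close (a b : T -> R) : (forall x, `|a x - b x| <= e)%R ->
    \int[P]_x (Num.max (a x) 0)%:E <= \int[P]_x (Num.max (b x) 0)%:E + e%:E.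
  move=> abe; apply: ge0_integral_le_addr => // x.
  - by rewrite lee_fin le_max lexx orbT.
  - by rewrite lee_fin le_max lexx orbT.
  - by rewrite -EFinD lee_fin max0_le_addr.
have [pf Epf _] := integral_max0_le fM.
have [pg Epg _] := integral_max0_le gM.
have [nf Enf _] := integral_max0_le fNM.
have [ng Eng _] := integral_max0_le gNM.
have pf_le : (pf <= pg + e)%R by rewrite -lee_fin EFinD -Epf -Epg max0_close.
have pg_le : (pg <= pf + e)%R by rewrite -lee_fin EFinD -Epf -Epg max0_close.
have nf_le : (nf <= ng + e)%R by rewrite -lee_fin EFinD -Enf -Eng max0_close.
have ng_le : (ng <= nf + e)%R by rewrite -lee_fin EFinD -Enf -Eng max0_close.
rewrite Epf Epg Enf Eng -!EFinD lee_fin ler_norml.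
by clear -pf_le pg_le nf_le ng_le; apply/andP; split; rewrite mulr2n; lra.
Qed.
End integral_without_measurability.

Lemma integral_sub_le_tv_dist (R : realType) d (X : measurableType d)
    (P Q : probability X R) (g : X -> R) (M : R) :
  0 < M -> measurable_fun [set: X] g -> (forall x, `|g x| <= M) ->
  (`|\int[P]_x (g x)%:E - \int[Q]_x (g x)%:E| <= M%:E * tv_dist P Q)%E.
Proof.
move=> M0 mg gM; set h := fun x => g x / M.
have h1 x : `|h x| <= 1.
  by rewrite /h normrM normfV (gtr0_norm M0) ler_pdivrMr// mul1r.
have mh : measurable_fun [set: X] h.
  by apply: measurable_funM => //; exact: measurable_cst.
have gE (nu : probability X R) :
    (\int[nu]_x (g x)%:E = M%:E * \int[nu]_x (h x)%:E)%E.
  rewrite -integralZl//; last first.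
    apply: measurable_bounded_integrable => //.
      exact: le_lt_trans (probability_le1 nu measurableT) (ltry 1).
    by exists 1; split=> // r r1 x _; exact: le_trans (h1 x) (ltW r1).
  by apply: eq_integral => x _; rewrite -EFinM /h mulrC divfK// gt_eqF.
have h1E x : (`|(h x)%:E| <= 1%:E)%E := h1 x.
have [a ha _] := abse_leP (integral_abse_le P h1E).
have [b hb _] := abse_leP (integral_abse_le Q h1E).
have tv_ge : (`|\int[P]_x (h x)%:E - \int[Q]_x (h x)%:E| <= tv_dist P Q)%E.
  by apply: ereal_sup_ubound; exists h.
rewrite !gE ha hb -!EFinM -EFinB -mulrBr /= normrM (gtr0_norm M0) EFinM.
apply: lee_wpmul2l; first by rewrite lee_fin ltW.
by move: tv_ge; rewrite ha hb.
Qed.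

Section ereal_approximation.
Context (R : realType).
Local Open Scope ereal_scope.

Lemma abse_sub_le_addr (x y : \bar R) (d : R) :
  x \is a fin_num -> y \is a fin_num -> `|x - y| <= d%:E ->
  x <= y + d%:E /\ y <= x + d%:E.
Proof.
move: x y => [r| |] [s| |] //= _ _; rewrite -!EFinD !lee_fin ler_norml.
by case/andP=> ? ?; split; lra.
Qed.

Lemma ereal_sup_le_addr (I : Type) (S : set I) (f g : I -> \bar R) (d : R) :
  (forall i, S i -> f i <= g i + d%:E) ->
  ereal_sup (f @` S) <= ereal_sup (g @` S) + d%:E.
Proof.
move=> fg; apply: ge_ereal_sup => _ [i Si <-].
by apply: le_trans (fg i Si) _; rewrite leeD2r//; apply: ereal_sup_ubound; exists i.
Qed.

Lemma ereal_inf_le_addr (I : Type) (S : set I) (f g : I -> \bar R) (d : R) :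
  (forall i, S i -> f i <= g i + d%:E) ->
  ereal_inf (f @` S) <= ereal_inf (g @` S) + d%:E.
Proof.
move=> fg; rewrite -leeBlDr//; apply: le_ereal_inf_tmp => _ [i Si <-].
by rewrite leeBlDr//; apply: le_trans (fg i Si); apply: ereal_inf_lbound; exists i.
Qed.

Lemma squeeze_cvge_addr (u : nat -> \bar R) (v : \bar R) (e : nat -> R) :
  e n @[n --> \oo] --> 0%R ->
  (\forall n \near \oo, u n <= v + (e n)%:E /\ v <= u n + (e n)%:E) ->
  u n @[n --> \oo] --> v.
Proof.
move=> e0 uv; have eE : (e n)%:E @[n --> \oo] --> 0.
  by apply/fine_cvgP; split; [exact: nearW|exact: e0].
apply: (squeeze_cvge (f := fun n => v - (e n)%:E) (h := fun n => v + (e n)%:E)).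
- by apply: filterS uv => n [uvn vun]; rewrite uvn andbT leeBlDr.
- rewrite -[X in _ --> X]sube0.
  exact: (cvgeB (fin_num_adde_defl _ _) (cvg_cst v) eE).
- rewrite -[X in _ --> X]adde0.
  exact: (cvgeD (fin_num_adde_defl _ _) (cvg_cst v) eE).
Qed.

End ereal_approximation.

Lemma measurable_Mprod_proj (n : nat) (d : 'I_n -> measure_display)
    (T : forall i, measurableType (d i)) (i : 'I_n) :
  measurable_fun [set: Mprod T] (fun x : Mprod T => x i).
Proof. by move=> _ B mB; rewrite setTI; apply: sub_sigma_algebra; exists i, B. Qed.

Lemma measurable_fun_Mprod (n : nat) (d : 'I_n -> measure_display)
    (T : forall i, measurableType (d i)) d' (X : measurableType d')
    (f : X -> Mprod T) :
  (forall i, measurable_fun [set: X] (fun x => f x i)) ->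
  measurable_fun [set: X] f.
Proof.
move=> fi; apply: (measurability (@cylinders n d T)) => //.
by move=> _ [A [i [B [mB ->]]] <-]; exact: fi i measurableT B mB.
Qed.

Section game_bounds.
Context (R : realType) (dO : measure_display) (Om : measurableType dO)
  (N1 N2 : nat)
  (dY1 : 'I_N1 -> measure_display) (Y1 : forall j, measurableType (dY1 j))
  (dY2 : 'I_N2 -> measure_display) (Y2 : forall j, measurableType (dY2 j))
  (U1 : 'I_N1 -> pseudoPMetricType R) (U2 : 'I_N2 -> pseudoPMetricType R)
  (c : Outcome Om U1 U2 -> R).

Lemma measurable_team_actions (N : nat) (dY : 'I_N -> measure_display)
    (Y : forall j, measurableType (dY j)) (U : 'I_N -> pseudoPMetricType R)
    (p : team_policy Y U) (z : N.-tuple R) :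
  admissible p -> measurable_fun [set: Mprod Y] (fun y => team_actions p y z).
Proof.
move=> [_ mp]; apply: measurable_fun_Mprod => j.
apply: measurableT_comp (mp j) _; apply: measurable_fun_pair.
  exact: measurable_Mprod_proj.
exact: measurable_cst.
Qed.

Definition realized_cost (p1 : team_policy Y1 U1) (p2 : team_policy Y2 U2)
    (z1 : N1.-tuple R) (z2 : N2.-tuple R) (x : Info Om Y1 Y2) : R :=
  c (x.1.1, team_actions p1 x.1.2 z1, team_actions p2 x.2 z2).

Lemma measurable_realized_cost p1 p2 z1 z2 :
  measurable_fun [set: Outcome Om U1 U2] c ->
  admissible p1 -> admissible p2 ->
  measurable_fun [set: Info Om Y1 Y2] (realized_cost p1 p2 z1 z2).
Proof.
move=> mc a1 a2; apply: (measurableT_comp mc).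
apply: measurable_fun_pair; first apply: measurable_fun_pair.
- exact: measurableT_comp measurable_fst measurable_fst.
- apply: measurableT_comp (measurable_team_actions z1 a1) _.
  exact: measurableT_comp measurable_snd measurable_fst.
- exact: measurableT_comp (measurable_team_actions z2 a2) measurable_snd.
Qed.

Lemma upper_value_le_addr (mu nu : probability (Info Om Y1 Y2) R) (d : R) :
  (forall p1 p2, admissible p1 -> admissible p2 ->
     (expected_cost c mu p1 p2 <= expected_cost c nu p1 p2 + d%:E)%E) ->
  (upper_value c mu <= upper_value c nu + d%:E)%E.
Proof.
move=> J_le; apply: ereal_inf_le_addr => p1 a1.
by apply: ereal_sup_le_addr => p2 a2; exact: J_le.
Qed.

Lemma lower_value_le_addr (mu nu : probability (Info Om Y1 Y2) R) (d : R) :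
  (forall p1 p2, admissible p1 -> admissible p2 ->
     (expected_cost c mu p1 p2 <= expected_cost c nu p1 p2 + d%:E)%E) ->
  (lower_value c mu <= lower_value c nu + d%:E)%E.
Proof.
move=> J_le; apply: ereal_sup_le_addr => p2 a2.
by apply: ereal_inf_le_addr => p1 a1; exact: J_le.
Qed.

Variable M : R.
Hypothesis cM : forall x, `|c x| <= M.
Local Open Scope ereal_scope.

Let abse_integral_cost_le (mu : probability (Info Om Y1 Y2) R)
    (p1 : team_policy Y1 U1) (p2 : team_policy Y2 U2) z1 z2 :
  `|\int[mu]_x (realized_cost p1 p2 z1 z2 x)%:E| <= M%:E.
Proof. by apply: integral_abse_le => x; rewrite lee_fin cM. Qed.

Let abse_integral2_cost_le (mu : probability (Info Om Y1 Y2) R)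
    (p1 : team_policy Y1 U1) (p2 : team_policy Y2 U2) z1 :
  `|\int[p2.1]_z2 \int[mu]_x (realized_cost p1 p2 z1 z2 x)%:E| <= M%:E.
Proof. exact: integral_abse_le (abse_integral_cost_le mu p1 p2 z1). Qed.

Lemma abse_expected_cost_le (mu : probability (Info Om Y1 Y2) R)
    (p1 : team_policy Y1 U1) (p2 : team_policy Y2 U2) :
  `|expected_cost c mu p1 p2| <= M%:E.
Proof. exact: integral_abse_le (abse_integral2_cost_le mu p1 p2). Qed.

Lemma abse_expected_cost_sub_le (mu nu : probability (Info Om Y1 Y2) R)
    (p1 : team_policy Y1 U1) (p2 : team_policy Y2 U2) :
  measurable_fun [set: Outcome Om U1 U2] c -> (0 < M)%R ->
  admissible p1 -> admissible p2 -> tv_dist mu nu \is a fin_num ->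
  `|expected_cost c mu p1 p2 - expected_cost c nu p1 p2| <=
    (M * fine (tv_dist mu nu) *+ 4)%:E.
Proof.
move=> mc M0 a1 a2 tv_fin; set e := (M * fine (tv_dist mu nu))%R.
have cost_close z1 z2 :
    `|\int[mu]_x (realized_cost p1 p2 z1 z2 x)%:E -
      \int[nu]_x (realized_cost p1 p2 z1 z2 x)%:E| <= e%:E.
  rewrite EFinM fineK//; apply: integral_sub_le_tv_dist => // [|x].
    exact: measurable_realized_cost.
  exact: cM.
have inner_close z1 :
    `|\int[p2.1]_z2 \int[mu]_x (realized_cost p1 p2 z1 z2 x)%:E -
      \int[p2.1]_z2 \int[nu]_x (realized_cost p1 p2 z1 z2 x)%:E| <= (e *+ 2)%:E.
  exact: integral_abse_sub_le (abse_integral_cost_le mu p1 p2 z1)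
    (abse_integral_cost_le nu p1 p2 z1) (cost_close z1).
rewrite -[4%N]/(2 * 2)%N mulrnA.
exact: integral_abse_sub_le (abse_integral2_cost_le mu p1 p2)
  (abse_integral2_cost_le nu p1 p2) inner_close.
Qed.

Lemma expected_cost_le_addr_tv (mu nu : probability (Info Om Y1 Y2) R)
    (p1 : team_policy Y1 U1) (p2 : team_policy Y2 U2) :
  measurable_fun [set: Outcome Om U1 U2] c -> (0 < M)%R ->
  admissible p1 -> admissible p2 -> tv_dist mu nu \is a fin_num ->
  let e := (M * fine (tv_dist mu nu) *+ 4)%R in
  expected_cost c mu p1 p2 <= expected_cost c nu p1 p2 + e%:E /\
  expected_cost c nu p1 p2 <= expected_cost c mu p1 p2 + e%:E.
Proof.
move=> mc M0 a1 a2 tv_fin e.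
have J_fin (rho : probability (Info Om Y1 Y2) R) :
    expected_cost c rho p1 p2 \is a fin_num.
  by rewrite fin_num_abs (le_lt_trans (abse_expected_cost_le rho p1 p2)) ?ltry.
apply: abse_sub_le_addr; [exact: J_fin|exact: J_fin|].
exact: abse_expected_cost_sub_le.
Qed.

End game_bounds.

Theorem theorem9 (R : realType)
  (dO : measure_display) (Om : measurableType dO)
  (N1 N2 : nat)
  (dY1 : 'I_N1 -> measure_display) (Y1 : forall j, measurableType (dY1 j))
  (dY2 : 'I_N2 -> measure_display) (Y2 : forall j, measurableType (dY2 j))
  (U1 : 'I_N1 -> pseudoPMetricType R) (U2 : 'I_N2 -> pseudoPMetricType R)
  (c : Outcome Om U1 U2 -> R)
  (hOm : standard_borel R Om)
  (hY1 : forall j, standard_borel R (Y1 j))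
  (hY2 : forall j, standard_borel R (Y2 j))
  (hU1 : forall j, hausdorff_space (U1 j) /\ compact [set: U1 j])
  (hU2 : forall j, hausdorff_space (U2 j) /\ compact [set: U2 j])
  (c_meas : measurable_fun [set: Outcome Om U1 U2] c)
  (c_bdd : exists M : R, forall x, `|c x| <= M)
  (c_cont : forall w : Om,
     continuous (fun u : prod_topology U1 * prod_topology U2 =>
                   c (w, u.1, u.2)))
  (mu_ : nat -> probability (Info Om Y1 Y2) R) (mu : probability (Info Om Y1 Y2) R)
  (h_class_n : forall n, in_class (mu_ n))
  (h_class : in_class mu)
  (h_tv : tv_dist (mu_ n) mu @[n --> \oo] --> 0%E) :
  upper_value c (mu_ n) @[n --> \oo] --> upper_value c mu /\
  lower_value c (mu_ n) @[n --> \oo] --> lower_value c mu.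
Proof.
have [M0 cM0] := c_bdd; set M := `|M0| + 1.
have M_gt0 : 0 < M by rewrite ltr_pwDr.
have cM x : `|c x| <= M by rewrite (le_trans (cM0 x)) // (le_trans (ler_norm M0)) ?lerDl.
have [tv_fin tv0] := (fine_cvgP _ _).1 h_tv.
set e := fun n => M * fine (tv_dist (mu_ n) mu) *+ 4.
have e0 : e n @[n --> \oo] --> 0.
  rewrite /e; under eq_fun do rewrite -mulrnAl.
  by rewrite -(mulr0 (M *+ 4)); exact: cvgM (cvg_cst _) tv0.
have J_close n p1 p2 : tv_dist (mu_ n) mu \is a fin_num ->
    admissible p1 -> admissible p2 ->
    (expected_cost c (mu_ n) p1 p2 <= expected_cost c mu p1 p2 + (e n)%:E /\
     expected_cost c mu p1 p2 <= expected_cost c (mu_ n) p1 p2 + (e n)%:E)%E.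
  by move=> tvn a1 a2; exact: expected_cost_le_addr_tv.
split; apply: (squeeze_cvge_addr e0); near=> n;
  have tvn : tv_dist (mu_ n) mu \is a fin_num by near: n.
- split; apply: upper_value_le_addr => p1 p2 a1 a2.
    exact: (J_close n p1 p2 tvn a1 a2).1.
  exact: (J_close n p1 p2 tvn a1 a2).2.
- split; apply: lower_value_le_addr => p1 p2 a1 a2.
    exact: (J_close n p1 p2 tvn a1 a2).1.
  exact: (J_close n p1 p2 tvn a1 a2).2.
Unshelve. all: by end_near.
Qed.
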